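(* Suppose hypothesis (H) holds. Then $-\infty<\lambda^*<+\infty$, and there exists $u^*\in S$ with $\lambda(u^* )=\lambda^*$.
   Context: $T,G:\mathbb{R}^n\to\mathbb{R}^n$ are continuously differentiable. $\Sigma=\{\psi\in\mathbb{R}^n\setminus\{0\}:\psi_i\ge0\ \forall i\}$. $S\subset\mathbb{R}^n$ is a nonempty open set with $\langle G(u),\psi\rangle>0$ for all $u\in S,\psi\in\Sigma$. For $u\in S$, $\lambda(u)=\inf_{\psi\in\Sigma}\langle T(u),\psi\rangle/\langle G(u),\psi\rangle$, and $\lambda^*=\sup_{u\in S}\lambda(u)$. Hypothesis (H): for every $u_0\in S$ the set $S(u_0)=\{u\in S:\lambda(u)\ge\lambda(u_0)\}$ is bounded and its closure is contained in $S$. *)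

From HB Require Import structures.
From mathcomp Require Import all_boot all_order all_algebra.
From mathcomp Require Import all_classical all_reals all_analysis.
Set Implicit Arguments. Unset Strict Implicit. Unset Printing Implicit Defensive.
Import Order.TTheory GRing.Theory Num.Theory.
Import numFieldNormedType.Exports.
Local Open Scope classical_set_scope.
Local Open Scope ring_scope.

Definition inner (R : realType) (n : nat) (u v : 'rV[R]_n) : R :=
  \sum_(i < n) u ord0 i * v ord0 i.

Definition C1 (R : realType) (n : nat) (f : 'rV[R]_n -> 'rV[R]_n) : Prop :=
  (forall x, differentiable f x) /\ (forall v, continuous (fun x => 'd f x v)).

Definition Sigma (R : realType) (n : nat) : set 'rV[R]_n :=
  [set psi | psi != 0 /\ forall i, 0 <= psi ord0 i].

Definition lam (R : realType) (n : nat) (T G : 'rV[R]_n -> 'rV[R]_n)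
  (u : 'rV[R]_n) : \bar R :=
  ereal_inf [set ((inner (T u) psi / inner (G u) psi)%:E) | psi in @Sigma R n].

Definition lam_star (R : realType) (n : nat) (T G : 'rV[R]_n -> 'rV[R]_n)
  (S : set 'rV[R]_n) : \bar R :=
  ereal_sup [set lam T G u | u in S].

Definition Ssub (R : realType) (n : nat) (T G : 'rV[R]_n -> 'rV[R]_n)
  (S : set 'rV[R]_n) (u0 : 'rV[R]_n) : set 'rV[R]_n :=
  [set u | S u /\ (lam T G u0 <= lam T G u)%E].

Definition hypH (R : realType) (n : nat) (T G : 'rV[R]_n -> 'rV[R]_n)
  (S : set 'rV[R]_n) : Prop :=
  forall u0, S u0 -> bounded_set (Ssub T G S u0) /\ closure (Ssub T G S u0) `<=` S.

From HB Require Import structures.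
From mathcomp Require Import all_boot all_order all_algebra.
From mathcomp Require Import all_classical all_reals all_analysis.
Import Order.TTheory GRing.Theory Num.Theory.
Import numFieldNormedType.Exports.
Local Open Scope classical_set_scope.
Local Open Scope ring_scope.

(* Since <G u, psi> > 0 on the cone, <T u, psi> / <G u, psi> is a weighted
   average of the coordinate ratios T_i(u) / G_i(u) (with weights
   psi_i G_i(u)), so lambda(u) is the least of these ratios, attained at a
   standard basis vector.  Hence lambda is continuous on S and real-valued.
   By (H) the superlevel set S(u0) has compact closure inside S, where the
   continuous function lambda attains its maximum; outside S(u0) lambda is
   below lambda(u0), so this maximum is lambda*. *)

Lemma inner_delta_mx (R : realType) (n : nat) (v : 'rV[R]_n) (i : 'I_n) :
  inner v (delta_mx ord0 i) = v ord0 i.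
Proof.
rewrite /inner (bigD1 i) //= mxE !eqxx mulr1 big1 ?addr0 // => j /negbTE ji.
by rewrite mxE ji andbF mulr0.
Qed.

Lemma Sigma_delta_mx (R : realType) (n : nat) (i : 'I_n) :
  @Sigma R n (delta_mx ord0 i).
Proof.
split; last by move=> j; rewrite mxE ler0n.
apply/eqP => delta0; have /eqP := congr1 (fun f => f ord0 i) delta0.
by rewrite !mxE !eqxx oner_eq0.
Qed.

Lemma bounded_closure (R : realType) (V : normedModType R) (A : set V) :
  bounded_set A -> bounded_set (closure A).
Proof.
move=> /ex_strict_bound_gt0 [M M0 AM].
have AcM : closure A `<=` closed_ball_ Num.norm (0 : V) M.
  rewrite [X in _ `<=` X](closure_id _).1; last exact: closed_closed_ball_.
  apply: closureS => x /AM /ltW.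
  by rewrite /closed_ball_ /= sub0r normrN.
exists M; split; first exact: gtr0_real.
move=> M' MM' x /AcM; rewrite /closed_ball_ /= sub0r normrN => xM.
by rewrite (le_trans xM) // ltW.
Qed.

Lemma continuous_bigmin (R : realType) (X : topologicalType) (I : Type)
    (r : seq I) (f0 : X -> R) (F : I -> X -> R) (x : X) :
  {for x, continuous f0} -> (forall i, {for x, continuous (F i)}) ->
  {for x, continuous (fun t => \big[Num.min/f0 t]_(i <- r) F i t)}.
Proof.
move=> f0x Fx; elim: r => [|i r IHr].
  by rewrite (_ : (fun t => _) = f0) //; apply/funext => t; rewrite big_nil.
rewrite (_ : (fun t => _) = F i \min (fun t => \big[Num.min/f0 t]_(j <- r) F j t)).
  exact: continuous_min.
by apply/funext => t; rewrite big_cons.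
Qed.

Lemma superlevel_compact_max {R : realType} {n : nat}
    (f : 'rV[R]_n -> R) {S : set 'rV[R]_n} {u0 : 'rV[R]_n} :
  S u0 -> (forall x, S x -> {for x, continuous f}) ->
  bounded_set [set u | S u /\ f u0 <= f u] ->
  closure [set u | S u /\ f u0 <= f u] `<=` S ->
  exists2 c, S c & forall u, S u -> f u <= f c.
Proof.
set A := [set u | S u /\ _]; move=> Su0 fS bA clAS.
have Au0 : A u0 by [].
have clA_compact : compact (closure A).
  by apply: bounded_closed_compact; [exact: bounded_closure|exact: closed_closure].
have [c /set_mem clAc cmax] :
    exists2 c, c \in closure A & forall t, t \in closure A -> f t <= f c.
  apply: compact_EVT_max => //; first by exists u0; exact: subset_closure.
  by apply: continuous_in_subspaceT => x /set_mem /clAS; exact: fS.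
have le_Ac u : A u -> f u <= f c by move=> Au; apply/cmax/mem_set/subset_closure.
exists c => [|u Su]; first exact: clAS.
have [|/ltW fu_lt] := leP (f u0) (f u); first by move=> le; exact: le_Ac.
exact: le_trans fu_lt (le_Ac _ Au0).
Qed.

Definition min_ratio {R : realType} {k : nat} (T G : 'rV[R]_k.+1 -> 'rV[R]_k.+1)
    (u : 'rV[R]_k.+1) : R :=
  \big[Num.min/T u ord0 ord0 / G u ord0 ord0]_(i < k.+1) (T u ord0 i / G u ord0 i).

Section min_ratio.
Context {R : realType} {k : nat} (T : 'rV[R]_k.+1 -> 'rV[R]_k.+1).
Context {G : 'rV[R]_k.+1 -> 'rV[R]_k.+1} {S : set 'rV[R]_k.+1}.
Hypothesis G_pos : forall u psi, S u -> Sigma psi -> 0 < inner (G u) psi.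

Lemma G_coord_gt0 u i : S u -> 0 < G u ord0 i.
Proof. by move=> Su; rewrite -inner_delta_mx; apply: G_pos => //; exact: Sigma_delta_mx. Qed.

Lemma lam_min_ratio u : S u -> lam T G u = (min_ratio T G u)%:E.
Proof.
move=> Su; apply/eqP; rewrite eq_le; apply/andP; split.
  have lam_le_ratio i : (lam T G u <= (T u ord0 i / G u ord0 i)%:E)%E.
    apply: ereal_inf_lbound; exists (delta_mx ord0 i); first exact: Sigma_delta_mx.
    by rewrite !inner_delta_mx.
  rewrite /min_ratio; elim/big_ind: _ => [|x y lam_x lam_y|i _] //.
  by rewrite /Num.min; case: ifP.
apply: le_ereal_inf_tmp => _ [psi Sigma_psi <-]; rewrite lee_fin.
rewrite ler_pdivlMr; last exact: G_pos.
rewrite /inner mulr_sumr; apply: ler_sum => j _.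
rewrite mulrA ler_wpM2r //; first exact: Sigma_psi.2.
by rewrite -ler_pdivlMr ?G_coord_gt0 //; exact: bigmin_le.
Qed.

Lemma continuous_min_ratio x : C1 T -> C1 G -> S x -> {for x, continuous (min_ratio T G)}.
Proof.
move=> [dT _] [dG _] Sx.
have coord_cont (F : 'rV[R]_k.+1 -> 'rV[R]_k.+1) i : differentiable F x ->
    {for x, continuous (fun u => F u ord0 i)}.
  move=> dF; exact: continuous_comp (differentiable_continuous dF)
    (@coord_continuous R 1 k.+1 ord0 i (F x)).
have ratio_cont i : {for x, continuous (fun u => T u ord0 i / G u ord0 i)}.
  apply: continuousM; first exact: coord_cont.
  by apply: continuousV; [rewrite gt_eqF ?G_coord_gt0|exact: coord_cont].
exact: continuous_bigmin.
Qed.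

End min_ratio.

Theorem lemma2 (R : realType) (n : nat) (T G : 'rV[R]_n -> 'rV[R]_n)
  (S : set 'rV[R]_n) :
  (0 < n)%N ->
  C1 T -> C1 G ->
  S !=set0 -> open S ->
  (forall u psi, S u -> @Sigma R n psi -> 0 < inner (G u) psi) ->
  hypH T G S ->
  (-oo < lam_star T G S < +oo)%E /\
  exists ustar, S ustar /\ lam T G ustar = lam_star T G S.
Proof.
case: n T G S => [//|k] T G S _ T_C1 G_C1 [u0 Su0] _ G_pos hH.
have lamE := lam_min_ratio T G_pos.
have Ssub_superlevel : Ssub T G S u0 =
    [set u | S u /\ min_ratio T G u0 <= min_ratio T G u].
  by apply/seteqP; split => u [Su le]; split => //; move: le; rewrite !lamE // lee_fin.
have [bS clS] := hH u0 Su0; rewrite Ssub_superlevel in bS clS.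
have [c Sc cmax] := superlevel_compact_max (min_ratio T G) Su0
  (fun x => continuous_min_ratio T G_pos x T_C1 G_C1) bS clS.
have starE : lam_star T G S = (min_ratio T G c)%:E.
  apply/eqP; rewrite eq_le; apply/andP; split; last first.
    by rewrite -lamE //; apply: ereal_sup_ubound; exists c.
  by apply: ge_ereal_sup => _ [u Su <-]; rewrite lamE // lee_fin; exact: cmax.
split; first by rewrite starE ltNye ltey.
by exists c; split => //; rewrite starE lamE.
Qed.
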